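(* Let $A$ and $B$ be commutative associative unital algebras over $\mathbb{C}$ or $\mathbb{R}$, and assume $B$ is connected in the sense that for every $k\ge0$ and $b\in B$, $b(b-1)(b-2)\cdots(b-k)=0$ implies $b=j$ for some $j\in\{0,1,\dots,k\}$. Let $\mathbf{f}\colon A\to B$ be a linear map such that there is $N\in\mathbb{N}$ with the property that for every $a\in A$ the characteristic function $R(\mathbf{f},a,z)$ is a polynomial in $z$ of degree at most $N$. Then $\mathbf{f}(1)=n$ for some integer $n$ with $0\le n\le N$, $R(\mathbf{f},1,z)=(1+z)^n$, and for every $a\in A$, $R(\mathbf{f},a,z)$ is a polynomial in $z$ of degree at most $n$.
   Context: For a linear map $\mathbf{f}\colon A\to B$, its characteristic function is the formal power series $R(\mathbf{f},a,z)=\exp\bigl(\mathbf{f}(\ln(1+az))\bigr)\in B[[z]]$, where $\ln(1+az)=\sum_{k\ge1}(-1)^{k-1}a^kz^k/k$ and $\mathbf{f}$ is applied coefficientwise. *)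

From HB Require Import structures.
From mathcomp Require Import all_boot all_order all_algebra.
From mathcomp Require Import complex.
From mathcomp Require Import reals.
Set Implicit Arguments. Unset Strict Implicit. Unset Printing Implicit Defensive.
Import Order.TTheory GRing.Theory Num.Theory.
Local Open Scope ring_scope.

(* Coefficients of ln(1 + a z) = sum_{k>=1} (-1)^(k-1) a^k z^k / k. *)
Definition log1p_coef (K : fieldType) (A : comAlgType K) (a : A) (k : nat) : A :=
  if k is 0 then 0 else (((-1) ^+ k.-1 / k%:R : K) *: a ^+ k).

(* n-th coefficient of the formal power series
   R(f,a,z) = exp (f (ln (1 + a z))) in B[[z]].  Since the series
   g(z) = f(ln(1+az)) has zero constant term, the z^n coefficient of
   exp g = sum_m g^m / m! only involves m <= n and the coefficients g_0..g_n,
   so it is computed exactly from the truncation G of g at degree n. *)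
Definition charfun (K : fieldType) (A B : comAlgType K) (f : A -> B) (a : A)
    (n : nat) : B :=
  let G : {poly B} := \poly_(i < n.+1) f (log1p_coef a i) in
  \sum_(m < n.+1) ((m`!%:R : K)^-1 *: (G ^+ m)`_n).

Definition connected_alg (K : fieldType) (B : comAlgType K) : Prop :=
  forall (k : nat) (b : B), \prod_(j < k.+1) (b - j%:R) = 0 ->
    exists j : 'I_k.+1, b = (j : nat)%:R.

Definition charfun_statement (K : fieldType) : Prop :=
  forall (A B : comAlgType K) (f : {linear A -> B}) (N : nat),
    connected_alg B ->
    (forall (a : A) (k : nat), (N < k)%N -> charfun f a k = 0) ->
    exists n : nat, [/\ (n <= N)%N, f 1 = n%:R,
      (forall k : nat, charfun f 1 k = 'C(n, k)%:R) &
      (forall (a : A) (k : nat), (n < k)%N -> charfun f a k = 0)].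

From HB Require Import structures.
From mathcomp Require Import all_boot all_order all_algebra.
From mathcomp Require Import complex.
From mathcomp Require Import reals.
From mathcomp Require Import ring zify.
Set Implicit Arguments. Unset Strict Implicit. Unset Printing Implicit Defensive.
Import Order.TTheory GRing.Theory Num.Theory.
Local Open Scope ring_scope.

(* The series
   E_a = R(f,a,z) solves E_a' = f(a / (1 + a z)) E_a with E_a(0) = 1, and such
   a linear differential equation has a unique solution in characteristic 0.
   For a = 1 this identifies E_1 with the binomial series (1 + z)^(f 1), whose
   coefficient of degree N + 1 is f(1)(f(1) - 1)...(f(1) - N) / (N + 1)!, so
   connectedness forces f(1) = n <= N.  Since
   ln(1 + (1 + a) z) = ln(1 + z) + ln(1 + a w) with w = z / (1 + z), the same
   uniqueness gives E_(1+a)(z) = (1 + z)^n E_a(z / (1 + z)).  If every E_a has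
   degree at most M > n, then (1 + z)^(M - n) E_(1+a)(z) = (1 + z)^M E_a(z / (1 + z))
   is an identity of polynomials; at z = -1 the left side vanishes and the right
   side is +-(the coefficient of z^M in E_a), so the degree bound drops to
   M - 1, and inductively to n. *)

Definition eqmodX (T : nzSemiRingType) (n : nat) (p q : {poly T}) :=
  take_poly n p = take_poly n q.

Notation "p = q %[modX n ]" := (eqmodX n p q)
  (at level 70, q at next level, format "p  =  q  %[modX  n ]").

Section TruncatedCongruence.
Variable T : comNzRingType.
Implicit Types (p q r u v : {poly T}) (n : nat).

Lemma eqmodXP n p q : p = q %[modX n] <-> forall i, (i < n)%N -> p`_i = q`_i.
Proof.
split=> [pq i lt_in | pq].
  by have := congr1 (fun r => r`_i) pq; rewrite /= !coef_take_poly lt_in.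
by apply/polyP => i; rewrite !coef_take_poly; case: ifP => // /pq.
Qed.

Lemma eqmodX_sym n p q : p = q %[modX n] -> q = p %[modX n].
Proof. exact: esym. Qed.

Lemma eqmodX_trans n p q r : p = q %[modX n] -> q = r %[modX n] -> p = r %[modX n].
Proof. exact: etrans. Qed.

Lemma eqmodX_leq m n p q : (m <= n)%N -> p = q %[modX n] -> p = q %[modX m].
Proof.
by move=> le_mn /eqmodXP pq; apply/eqmodXP => i lt_im; rewrite pq // (leq_trans lt_im).
Qed.

Lemma eqmodXD n p q p' q' :
  p = p' %[modX n] -> q = q' %[modX n] -> p + q = p' + q' %[modX n].
Proof. by rewrite /eqmodX !take_polyD => pp qq; congr (_ + _). Qed.

Lemma eqmodX_subr0 n p q : p - q = 0 %[modX n] <-> p = q %[modX n].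
Proof.
rewrite !eqmodXP; split=> pq i /pq; rewrite coefB coef0; first exact: subr0_eq.
by move->; rewrite subrr.
Qed.

Lemma eqmodXM n p q p' q' :
  p = p' %[modX n] -> q = q' %[modX n] -> p * q = p' * q' %[modX n].
Proof.
move=> /eqmodXP pp /eqmodXP qq; apply/eqmodXP => i lt_in; rewrite !coefM.
apply: eq_bigr => j _.
have lt_jn : (j < n)%N by apply: leq_ltn_trans lt_in; rewrite -ltnS.
by rewrite pp // qq // (leq_ltn_trans (leq_subr _ _) lt_in).
Qed.

Lemma eqmodXX n p q k : p = q %[modX n] -> p ^+ k = q ^+ k %[modX n].
Proof. by move=> pq; elim: k => [|k IHk] //; rewrite !exprS; apply: eqmodXM. Qed.

Lemma eqmodX_sum n (I : finType) (P Q : I -> {poly T}) :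
  (forall j, P j = Q j %[modX n]) -> \sum_j P j = \sum_j Q j %[modX n].
Proof.
by move=> PQ; rewrite /eqmodX !take_poly_sum; apply: eq_bigr => j _; apply: PQ.
Qed.

Lemma eqmodXD0 n p q : p = 0 %[modX n] -> q = 0 %[modX n] -> p + q = 0 %[modX n].
Proof. by move=> p0 q0; have := eqmodXD p0 q0; rewrite addr0. Qed.

Lemma eqmodX_mul0l n p q : p = 0 %[modX n] -> p * q = 0 %[modX n].
Proof. by move=> p0; rewrite -(mul0r q); apply: eqmodXM. Qed.

Lemma eqmodX_mulX n p q : p = q %[modX n] -> 'X * p = 'X * q %[modX n.+1].
Proof. by move=> /eqmodXP pq; apply/eqmodXP => -[|i] lt_in; rewrite !coefXM //= pq. Qed.

Lemma eqmodX_deriv n p q : p = q %[modX n.+1] -> p^`() = q^`() %[modX n].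
Proof. by move=> /eqmodXP pq; apply/eqmodXP => i lt_in; rewrite !coef_deriv pq. Qed.

Lemma eqmodX_mul2l n u v p q :
  v * u = 1 %[modX n] -> u * p = u * q %[modX n] -> p = q %[modX n].
Proof.
move=> vu1 upq; have vuK r : v * u * r = r %[modX n].
  by rewrite -[X in _ = X %[modX n]]mul1r; apply: eqmodXM.
apply: eqmodX_trans (eqmodX_sym (vuK p)) _; apply: eqmodX_trans (vuK q).
by rewrite -!mulrA; apply: eqmodXM.
Qed.

Lemma eqmodX_eq n p q :
  (size p <= n)%N -> (size q <= n)%N -> p = q %[modX n] -> p = q.
Proof. by move=> /take_poly_id {2}<- /take_poly_id {2}<-. Qed.

Lemma coef_exp_lt p i k : p`_0 = 0 -> (i < k)%N -> (p ^+ k)`_i = 0.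
Proof.
move=> p0 lt_ik; have -> : p = drop_poly 1 p * 'X.
  rewrite -[LHS](poly_take_drop 1) [take_poly 1 p](_ : _ = 0) ?add0r //.
  by apply/polyP => -[|j]; rewrite coef_take_poly coef0.
by rewrite exprMn coefMXn lt_ik.
Qed.

Lemma coef_comp_poly_leq m p q i : (size p <= m)%N ->
  (p \Po q)`_i = \sum_(j < m) p`_j * (q ^+ j)`_i.
Proof.
move=> le_pm; rewrite coef_comp_poly.
rewrite (big_ord_widen m (fun j => p`_j * (q ^+ j)`_i) le_pm).
rewrite big_mkcond /=; apply: eq_bigr => j _; case: ifP => // /negbT.
by rewrite -leqNgt => /leq_sizeP -> //; rewrite mul0r.
Qed.

Lemma eqmodX_comp n p q r : r`_0 = 0 -> p = q %[modX n] -> p \Po r = q \Po r %[modX n].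
Proof.
move=> r0 /eqmodX_subr0 /eqmodXP pq; apply/eqmodX_subr0/eqmodXP => i lt_in.
rewrite -comp_polyB coef_comp_poly coef0 big1 // => j _.
case: (ltnP j n) => [/pq -> | le_nj]; first by rewrite coef0 mul0r.
by rewrite coef_exp_lt ?mulr0 // (leq_trans lt_in).
Qed.

End TruncatedCongruence.

Section GeometricSeries.
Variable T : comNzRingType.
Implicit Types (p : {poly T}) (n : nat).

Definition geom n (b : T) : {poly T} := \poly_(i < n) (- b) ^+ i.

Lemma geomP n b : geom n b * (1 + b%:P * 'X) = 1 %[modX n].
Proof.
apply/eqmodXP => i lt_in; rewrite mulrDr mulr1 coefD mulrA coefMX coefMC.
rewrite !coef_poly lt_in coef1.
case: i lt_in => [|i] lt_in /=; first by rewrite expr0 addr0.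
by rewrite (ltnW lt_in) exprS mulNr mulrC addNr.
Qed.

Lemma geom1P n : geom n 1 * (1 + 'X) = 1 %[modX n].
Proof. by have := geomP n 1; rewrite polyC1 mul1r. Qed.

Lemma mulX_geom1 n : (1 + 'X) * ('X * geom n 1) = 'X %[modX n.+1].
Proof.
rewrite mulrCA -[X in _ = X %[modX _]]mulr1; apply: eqmodX_mulX.
by rewrite mulrC; apply: geom1P.
Qed.

Lemma deriv_mulX_geom1 n : ('X * geom n 1)^`() = geom n 1 ^+ 2 %[modX n].
Proof.
apply/eqmodXP => i lt_in; rewrite coef_deriv coefXM coef_poly lt_in expr2 coefM /=.
rewrite (eq_bigr (fun _ => (-1) ^+ i)) ?sumr_const ?card_ord // => j _.
have le_ji : (j <= i)%N by rewrite -ltnS.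
rewrite !coef_poly (leq_ltn_trans le_ji lt_in) (leq_ltn_trans (leq_subr _ _) lt_in).
by rewrite -exprD subnKC.
Qed.

(* a / (1 + a X), the derivative of ln(1 + a X) *)
Definition logder n (a : T) : {poly T} := a%:P * geom n a.

Lemma logderP n a : logder n a * (1 + a%:P * 'X) = a%:P %[modX n].
Proof.
rewrite /logder -mulrA -[X in _ = X %[modX _]]mulr1.
by apply: eqmodXM => //; apply: geomP.
Qed.

(* Differentiate ln(1 + (1 + a) X) = ln(1 + X) + ln(1 + a W) with
   W = X / (1 + X) and W' = 1 / (1 + X)^2. *)
Lemma logderD1 n a : logder n (1 + a) =
  geom n 1 + (logder n a \Po ('X * geom n 1)) * geom n 1 ^+ 2 %[modX n].
Proof.
set V := geom n 1; set W := 'X * V; set H := logder n a \Po W.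
apply: (eqmodX_mul2l (geomP n (1 + a))).
apply: (eqmodX_trans (q := (1 + a)%:P)); first by rewrite mulrC; apply: logderP.
have eV : V * (1 + 'X) - 1 = 0 %[modX n] by apply/eqmodX_subr0/geom1P.
have eH : H * (1 + a%:P * W) - a%:P = 0 %[modX n].
  apply/eqmodX_subr0; have W0 : W`_0 = 0 by rewrite coefXM.
  have := eqmodX_comp W0 (logderP n a).
  rewrite (comp_polyM (logder n a)) comp_polyD (comp_polyM _ 'X) comp_polyX.
  by rewrite -polyC1 !comp_polyC.
rewrite polyCD polyC1; apply/eqmodX_subr0.
have -> : 1 + a%:P - (1 + (1 + a%:P) * 'X) * (V + H * V ^+ 2) =
    (V * (1 + 'X) - 1) *
      (a%:P * 'X * (V + H * V ^+ 2) - 1 - a%:P - a%:P * W - a%:P * V) +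
    (H * (1 + a%:P * W) - a%:P) * (- (V * (1 + 'X) - 1 + 1) * V) by rewrite /W; ring.
by apply: eqmodXD0; apply: eqmodX_mul0l.
Qed.

(* (1 + X)^M p(X / (1 + X)) when size p <= M + 1 *)
Definition homog M p : {poly T} :=
  \sum_(j < M.+1) p`_j *: ('X^j * (1 + 'X) ^+ (M - j)).

Lemma comp_mulX_geom1 M n p : (size p <= M.+1)%N ->
  (1 + 'X) ^+ M * (p \Po ('X * geom n 1)) = homog M p %[modX n.+1].
Proof.
move=> size_p; rewrite -{1}(take_poly_id size_p) /take_poly poly_def.
rewrite -[_ \Po _]/(comp_poly _ _) raddf_sum mulr_sumr /=.
apply: eqmodX_sum => j; rewrite comp_polyZ comp_Xn_poly -scalerAr -!mul_polyC.
apply: eqmodXM => //; have le_jM : (j <= M)%N by rewrite -ltnS.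
rewrite -{1}(subnK le_jM) exprD -mulrA -exprMn mulrC.
by apply: eqmodXM => //; apply/eqmodXX/mulX_geom1.
Qed.

Lemma mul_1addX_deriv_exp m :
  (1 + 'X) * ((1 + 'X) ^+ m)^`() = (1 + 'X) ^+ m *+ m :> {poly T}.
Proof.
rewrite deriv_exp derivD derivX -polyC1 derivC add0r mul1r polyC1.
by case: m => [|m]; rewrite ?mulr0n ?mulr0 //= mulrnAr -exprS.
Qed.

Lemma size_exp_1addX k : size ((1 + 'X) ^+ k : {poly T}) = k.+1.
Proof. by rewrite addrC -[1]opprK -polyC1 -polyCN size_exp_XsubC. Qed.

Lemma size_homog M p : (size (homog M p) <= M.+1)%N.
Proof.
rewrite /homog; apply: leq_trans; first exact: size_sum.
apply/bigmax_leqP => j _.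
apply: leq_trans (size_scale_leq _ _) _; apply: leq_trans (size_polyMleq _ _) _.
by rewrite size_polyXn size_exp_1addX; have := ltn_ord j; lia.
Qed.

Lemma horner_homogN1 M p : (homog M p).[-1] = p`_M * (-1) ^+ M.
Proof.
have hornerN1 j : ('X^j * (1 + 'X) ^+ (M - j)).[-1] = (-1) ^+ j * 0 ^+ (M - j) :> T.
  by rewrite hornerM hornerXn horner_exp hornerD hornerC hornerX addrN.
rewrite /homog horner_sum big_ord_recr /= big1 ?add0r => [|j _].
  by rewrite -mul_polyC hornerCM hornerN1 subnn expr0 mulr1.
by rewrite -mul_polyC hornerCM hornerN1 expr0n subn_eq0 leqNgt ltn_ord !mulr0.
Qed.

End GeometricSeries.

Lemma eqmodX_map (R S : comNzRingType) (g : {additive R -> S}) n p q :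
  p = q %[modX n] -> map_poly g p = map_poly g q %[modX n].
Proof. by move=> /eqmodXP pq; apply/eqmodXP => i lt_in; rewrite !coef_map /= pq. Qed.

Lemma map_geom (R S : comNzRingType) (g : {rmorphism R -> S}) n b :
  map_poly g (geom n b) = geom n (g b).
Proof.
apply/polyP => i; rewrite coef_map !coef_poly /=.
by case: ifP; rewrite ?rmorph0 // rmorphXn rmorphN.
Qed.

Section CharZeroAlgebra.
Variables (F : fieldType) (B : comAlgType F).
Hypothesis charF0 : [pchar F] =i pred0.
Implicit Types g : {poly B}.

Lemma natfS_neq0 k : (k.+1%:R : F) != 0.
Proof. by rewrite ((pcharf0P F).1 charF0). Qed.

Lemma natf_fact_neq0 k : (k`!%:R : F) != 0.
Proof. by rewrite ((pcharf0P F).1 charF0) -lt0n fact_gt0. Qed.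

Lemma mulrnSI k : injective (fun x : B => x *+ k.+1).
Proof.
move=> x y /(congr1 (fun z => (k.+1%:R : F)^-1 *: z)).
by rewrite /= -!scaler_nat !scalerA mulVf ?natfS_neq0 // !scale1r.
Qed.

Lemma eqmodX_ode_uniq n (h p q : {poly B}) :
  p^`() = h * p %[modX n] -> q^`() = h * q %[modX n] -> p`_0 = q`_0 ->
  p = q %[modX n.+1].
Proof.
move=> /eqmodXP dp /eqmodXP dq pq0.
suff: forall i, (i <= n)%N -> p = q %[modX i.+1] by apply.
elim=> [_ | i IHi lt_in]; first by apply/eqmodXP => -[].
have pq := IHi (ltnW lt_in).
have /eqmodXP hpq : h * p = h * q %[modX i.+1] by apply: eqmodXM.
move/eqmodXP: pq => pq; apply/eqmodXP => j; rewrite ltnS leq_eqVlt.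
case/orP=> [/eqP -> | /pq //]; apply: (@mulrnSI i).
by rewrite /= -!coef_deriv dp // dq // hpq.
Qed.

Definition exp_trunc n (g : {poly B}) : {poly B} :=
  \sum_(m < n.+1) ((m`!%:R : F)^-1)%:A *: g ^+ m.

Lemma coef_exp_trunc n g i : g`_0 = 0 -> (i <= n)%N ->
  (exp_trunc n g)`_i = \sum_(m < i.+1) (m`!%:R : F)^-1 *: (g ^+ m)`_i.
Proof.
move=> g0 le_in; rewrite coef_sum.
pose c m := (m`!%:R : F)^-1 *: (g ^+ m)`_i.
rewrite (@big_ord_widen _ _ _ i.+1 n.+1 c le_in).
rewrite [RHS]big_mkcond /=; apply: eq_bigr => m _; rewrite coefZ mulr_algl.
by case: ifP => // /negbT; rewrite -leqNgt => lt_im; rewrite coef_exp_lt ?scaler0.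
Qed.

Lemma exp_trunc_eqmodX m n g :
  g`_0 = 0 -> (n <= m)%N -> exp_trunc m g = exp_trunc n g %[modX n.+1].
Proof.
move=> g0 le_nm; apply/eqmodXP => i lt_in.
by rewrite !coef_exp_trunc // (leq_trans _ le_nm).
Qed.

Lemma deriv_exp_trunc n g : (exp_trunc n.+1 g)^`() = g^`() * exp_trunc n g.
Proof.
rewrite /exp_trunc big_ord_recl /= expr0 derivD derivZ derivC scaler0 add0r.
rewrite raddf_sum mulr_sumr; apply: eq_bigr => m _ /=.
rewrite derivZ deriv_exp /bump /= add0n add1n -scalerMnr scalerMnl scalerAr.
congr (_ * (_ *: _)); rewrite scalerMnl; congr (_ *: _).
by rewrite factS natrM invfM -mulr_natr -mulrA mulrCA mulVf ?mulr1 ?natfS_neq0.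
Qed.

Definition gbinom (b : B) k : B := (k`!%:R : F)^-1 *: \prod_(j < k) (b - j%:R).

Lemma gbinomS b k : gbinom b k.+1 *+ k.+1 = gbinom b k * (b - k%:R).
Proof.
rewrite /gbinom big_ord_recr /= scalerMnl -scalerAl; congr (_ *: _).
by rewrite -mulr_natr factS natrM invfM -mulrA mulrCA mulVf ?mulr1 ?natfS_neq0.
Qed.

Lemma gbinom_nat m k : gbinom m%:R k = 'C(m, k)%:R.
Proof.
rewrite /gbinom; have -> : \prod_(j < k) (m%:R - j%:R : B) = (m ^_ k)%:R.
  elim: k => [|k IHk]; first by rewrite big_ord0.
  rewrite big_ord_recr /= IHk ffactnSr natrM.
  case: (leqP k m) => [le_km | lt_mk]; first by rewrite natrB.
  by rewrite ffact_small // !mul0r.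
rewrite -bin_ffact natrM mulr_natr -scaler_nat scalerA.
by rewrite mulVf ?natf_fact_neq0 // scale1r.
Qed.

Lemma gbinom_eq0 b k : (gbinom b k == 0) = (\prod_(j < k) (b - j%:R) == 0).
Proof. by rewrite scaler_eq0 invr_eq0 (negbTE (natf_fact_neq0 k)). Qed.

Definition binomser n (b : B) : {poly B} := \poly_(k < n.+1) gbinom b k.

Lemma binomser_ode n b :
  (binomser n b)^`() = b%:P * geom n 1 * binomser n b %[modX n].
Proof.
apply: (eqmodX_mul2l (u := 1 + 'X) (v := geom n 1)); first exact: geom1P.
apply: (eqmodX_trans (q := b%:P * binomser n b)).
  apply/eqmodXP => i lt_in.
  rewrite mulrDl mul1r coefD coefXM coefCM !coef_deriv !coef_poly.
  rewrite !ltnS (ltnW lt_in) lt_in.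
  case: i lt_in => [|i] lt_in /=; first by rewrite addr0 gbinomS subr0 mulrC.
  by rewrite (ltnW lt_in) gbinomS -[gbinom b i.+1 *+ _]mulr_natr -mulrDr subrK mulrC.
rewrite mulrA mulrCA -{1}[b%:P]mulr1; apply: eqmodXM => //; apply: eqmodXM => //.
by apply: eqmodX_sym; rewrite mulrC; apply: geom1P.
Qed.

End CharZeroAlgebra.

Section CharacteristicFunction.
Variable F : fieldType.
Hypothesis charF0 : [pchar F] =i pred0.
Variables A B : comAlgType F.
Variable f : {linear A -> B}.

Local Notation "q ^A" := (map_poly (in_alg A) q) (at level 2, format "q ^A").
Local Notation "q ^B" := (map_poly (in_alg B) q) (at level 2, format "q ^B").

Lemma map_linearMr (p : {poly A}) (q : {poly F}) :
  map_poly f (p * q^A) = map_poly f p * q^B.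
Proof.
apply/polyP => i; rewrite coef_map !coefM raddf_sum; apply: eq_bigr => j _.
by rewrite !coef_map /= !mulr_algr linearZ.
Qed.

Lemma map_linear_comp (p : {poly A}) (q : {poly F}) :
  map_poly f (p \Po q^A) = map_poly f p \Po q^B.
Proof.
have size_fp : (size (map_poly f p) <= size p)%N by apply: size_poly.
apply/polyP => i; rewrite coef_map /= (coef_comp_poly_leq _ _ (leqnn (size p))).
rewrite (coef_comp_poly_leq _ _ size_fp).
rewrite raddf_sum; apply: eq_bigr => j _.
by rewrite -!rmorphXn !coef_map /= !mulr_algr linearZ.
Qed.

Lemma map_linear_alg (q : {poly F}) : map_poly f q^A = (f 1)%:P * q^B.
Proof.
apply/polyP => i; rewrite coefCM !coef_map /= -[_%:A]mulr1 mulr_algl linearZ.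
by rewrite /= mulr_algr.
Qed.

Lemma geom1_alg (T : comAlgType F) n : geom n (1 : T) = map_poly (in_alg T) (geom n 1).
Proof. by rewrite map_geom rmorph1. Qed.

Definition logser n a : {poly B} := \poly_(i < n.+1) f (log1p_coef a i).
Definition charser n a : {poly B} := \poly_(i < n.+1) charfun f a i.

Lemma logser0 n a : (logser n a)`_0 = 0.
Proof. by rewrite coef_poly /= linear0. Qed.

Lemma deriv_logser n a : (logser n a)^`() = map_poly f (logder n a).
Proof.
apply/polyP => i; rewrite coef_deriv coef_map !coef_poly /= ltnS coefCM coef_poly.
case: ifP => _ /=; last by rewrite mul0rn mulr0 linear0.
rewrite linearZ /= -scaler_nat scalerA mulrCA mulfV ?natfS_neq0 // mulr1 -linearZ /=.
by rewrite -mulr_algl -in_algE rmorph_sign [(- a) ^+ _]exprNn mulrCA -exprS.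
Qed.

Lemma charfun0 a : charfun f a 0 = 1.
Proof. by rewrite /charfun big_ord1 expr0 coef1 /= invr1 scale1r. Qed.

Lemma logser_eqmodX m n a : (m <= n)%N -> logser n a = logser m a %[modX m.+1].
Proof.
move=> le_mn; apply/eqmodXP => i lt_im.
by rewrite !coef_poly lt_im (leq_trans lt_im).
Qed.

Lemma charser_exp_trunc n a : charser n a = exp_trunc n (logser n a) %[modX n.+1].
Proof.
apply/eqmodXP => i lt_in.
rewrite coef_poly lt_in coef_exp_trunc ?logser0 // /charfun /=.
apply: eq_bigr => m _; congr (_ *: _).
by have /eqmodXP -> // := eqmodXX m (logser_eqmodX (m := i) a lt_in).
Qed.

Lemma charser_ode n a :
  (charser n a)^`() = map_poly f (logder n a) * charser n a %[modX n].
Proof.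
case: n => [|n]; first by rewrite /eqmodX !take_poly0l.
have G0 := logser0 n.+1 a.
apply: eqmodX_trans (eqmodX_deriv (charser_exp_trunc n.+1 a)) _.
rewrite deriv_exp_trunc // deriv_logser; apply: eqmodXM => //.
apply: eqmodX_trans (eqmodX_sym (exp_trunc_eqmodX G0 (leqnSn n))) _.
exact: eqmodX_sym (eqmodX_leq (leqnSn _) (charser_exp_trunc n.+1 a)).
Qed.

Lemma map_logder1 n : map_poly f (logder n 1) = (f 1)%:P * geom n 1.
Proof. by rewrite /logder polyC1 mul1r geom1_alg map_linear_alg -geom1_alg. Qed.

Lemma map_logderD1 n a : map_poly f (logder n (1 + a)) = (f 1)%:P * geom n 1 +
  (map_poly f (logder n a) \Po ('X * geom n 1)) * geom n 1 ^+ 2 %[modX n].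
Proof.
have WA : 'X * geom n (1 : A) = ('X * geom n 1)^A.
  by rewrite rmorphM /= map_polyX geom1_alg.
have := eqmodX_map f (logderD1 n a); rewrite WA geom1_alg -rmorphXn raddfD /=.
rewrite map_linearMr map_linear_comp map_linear_alg.
by rewrite rmorphXn /= rmorphM /= map_polyX -!geom1_alg.
Qed.

(* Both sides solve the differential equation of [charser_ode] for 1 + a. *)
Lemma charser_shift n a m : f 1 = m%:R ->
  charser n (1 + a) = (1 + 'X) ^+ m * (charser n a \Po ('X * geom n 1)) %[modX n.+1].
Proof.
move=> f1m; set V := geom n 1; set W := 'X * V; set E := charser n a.
set h := map_poly f (logder n a); set h1 := map_poly f (logder n (1 + a)).
have W0 : W`_0 = 0 by rewrite coefXM.
apply: (eqmodX_ode_uniq charF0 (h := h1)); first exact: charser_ode; last first.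
  rewrite -!horner_coef0 hornerM horner_exp horner_comp !horner_coef0 W0 horner_coef0.
  by rewrite !coef_poly /= !charfun0 coefD coef1 coefX addr0 expr1n mul1r.
apply: (eqmodX_mul2l (u := 1 + 'X) (v := V)); first exact: geom1P.
rewrite derivM deriv_comp mulrDr mulrA mul_1addX_deriv_exp.
rewrite -mulr_natl -polyC_natr -f1m; apply/eqmodX_subr0.
have eE : E^`() \Po W - (h \Po W) * (E \Po W) = 0 %[modX n].
  rewrite -comp_polyM -comp_polyB -(comp_poly0 W); apply: eqmodX_comp W0 _.
  exact/eqmodX_subr0/charser_ode.
have eV : V * (1 + 'X) - 1 = 0 %[modX n] by apply/eqmodX_subr0/geom1P.
have eW : W^`() - V ^+ 2 = 0 %[modX n] by apply/eqmodX_subr0/deriv_mulX_geom1.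
have eh : h1 - ((f 1)%:P * V + (h \Po W) * V ^+ 2) = 0 %[modX n].
  exact/eqmodX_subr0/map_logderD1.
set P := 1 + 'X; set Ec := E \Po W.
have -> : (f 1)%:P * P ^+ m * Ec + P * (P ^+ m * ((E^`() \Po W) * W^`())) -
    P * (h1 * (P ^+ m * Ec)) =
  (V * P - 1) * (- ((f 1)%:P * P ^+ m * Ec)) +
  ((E^`() \Po W) - (h \Po W) * Ec) * (P * P ^+ m * W^`()) +
  (W^`() - V ^+ 2) * (P * P ^+ m * (h \Po W) * Ec) +
  (h1 - ((f 1)%:P * V + (h \Po W) * V ^+ 2)) * (- (P * P ^+ m * Ec)) by ring.
by repeat apply: eqmodXD0; apply: eqmodX_mul0l.
Qed.

Lemma charfun1 k : charfun f 1 k = gbinom (f 1) k.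
Proof.
have /eqmodXP chk : charser k 1 = binomser k (f 1) %[modX k.+1].
  apply: (eqmodX_ode_uniq charF0 (h := (f 1)%:P * geom k 1)).
  - by rewrite -map_logder1; apply: charser_ode.
  - exact: binomser_ode.
  - by rewrite !coef_poly charfun0 /gbinom big_ord0 invr1 scale1r.
by have := chk k (ltnSn k); rewrite !coef_poly ltnSn.
Qed.

Definition charfun_deg_le N := forall a k, (N < k)%N -> charfun f a k = 0.

Lemma size_charser N n a : charfun_deg_le N -> (size (charser n a) <= N.+1)%N.
Proof.
move=> degN; apply/leq_sizeP => j lt_Nj.
by rewrite coef_poly; case: ifP => // _; apply: degN.
Qed.

(* Both sides have degree at most 2M, so the congruence modulo X^(2M+1)
   is an equality. *)
Lemma charser_shift_homog m M a :
  f 1 = m%:R -> (m <= M)%N -> charfun_deg_le M ->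
  (1 + 'X) ^+ (M - m) * charser (M + M) (1 + a) = homog M (charser (M + M) a).
Proof.
move=> f1m le_mM degM; set L := (M + M)%N; set P := 1 + 'X.
apply: (eqmodX_eq (n := L.+1)).
- apply: leq_trans; first exact: size_polyMleq.
  rewrite size_exp_1addX addSn /=; have := size_charser L (1 + a) degM.
  by rewrite /L; move: (size _) => s; lia.
- by apply: leq_trans (size_homog _ _) _; rewrite /L; lia.
apply: (eqmodX_mul2l (u := P ^+ m) (v := geom L.+1 1 ^+ m)).
  by rewrite -exprMn; have := eqmodXX m (geom1P B L.+1); rewrite expr1n.
rewrite mulrA -exprD subnKC //.
apply: (eqmodX_trans (q := P ^+ M * (P ^+ m * (charser L a \Po ('X * geom L 1))))).
  by apply: eqmodXM => //; apply: charser_shift.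
rewrite mulrCA; apply: eqmodXM => //.
by apply: comp_mulX_geom1; apply: size_charser degM.
Qed.

Lemma charfun_deg_leS m M :
  f 1 = m%:R -> (m <= M)%N -> charfun_deg_le M.+1 -> charfun_deg_le M.
Proof.
move=> f1m le_mM degM a k; rewrite leq_eqVlt => /orP[/eqP <- | /degM //].
have := congr1 (horner^~ (-1)) (charser_shift_homog a f1m (leqW le_mM) degM).
rewrite horner_homogN1 hornerM horner_exp hornerD hornerC hornerX addrN expr0n.
rewrite subn_eq0 leqNgt ltnS le_mM mul0r coef_poly ifT; last by lia.
by move=> e0; rewrite -[LHS](signrMK M.+1) [_ * charfun _ _ _]mulrC -e0 mulr0.
Qed.

Lemma charfun_deg_le_f1 m N :
  f 1 = m%:R -> (m <= N)%N -> charfun_deg_le N -> charfun_deg_le m.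
Proof.
move=> f1m; elim: N => [|N IHN] le_mN degN.
  by move: le_mN; rewrite leqn0 => /eqP ->.
move: le_mN; rewrite leq_eqVlt => /orP[/eqP -> // | lt_mN].
exact: IHN lt_mN (charfun_deg_leS f1m lt_mN degN).
Qed.

Lemma charfun_f1_nat N :
  connected_alg B -> charfun_deg_le N -> exists j : 'I_N.+1, f 1 = j%:R.
Proof.
move=> connB degN; apply: connB; apply/eqP.
by rewrite -(gbinom_eq0 charF0) -charfun1 degN.
Qed.

End CharacteristicFunction.

Theorem charfun_statement_pchar0 (F : fieldType) :
  [pchar F] =i pred0 -> charfun_statement F.
Proof.
move=> charF0 A B f N connB degN.
have [n f1n] := charfun_f1_nat charF0 connB degN.
have le_nN : (n <= N)%N by rewrite -ltnS.
exists n; split=> // [k | ]; first by rewrite charfun1 // f1n gbinom_nat.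
exact: charfun_deg_le_f1 f1n le_nN degN.
Qed.

Theorem mainTheorem2 :
  (forall R : realType, charfun_statement R) /\
  (forall R : realType, charfun_statement (complex R)).
Proof. by split=> R; apply: charfun_statement_pchar0; apply: pchar_num. Qed.
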